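(* Let $G$ be a finite simple graph without isolated vertices. If $G$ has no critical vertices, then $G$ has a perfect 2-matching.
   Context: A vertex is critical if deleting it strictly decreases the stability number $\alpha(G)$ (the maximum size of a set of pairwise non-adjacent vertices); equivalently, it belongs to every maximum stable set. A perfect 2-matching of a graph is an assignment of weights in $\{0,1/2,1\}$ to its edges such that the total weight of edges at each vertex is at most 1 and every vertex is incident to some edge of nonzero weight; equivalently, a family of vertex-disjoint edges and odd cycles covering all vertices. *)

From mathcomp Require Import all_boot all_order all_algebra.
Set Implicit Arguments. Unset Strict Implicit. Unset Printing Implicit Defensive.
Import GRing.Theory Num.Theory.

Definition simple_graph (T : finType) (e : rel T) : Prop :=
  symmetric e /\ irreflexive e.

Definition no_isolated (T : finType) (e : rel T) : Prop :=
  forall v : T, exists u : T, e v u.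

Definition stable (T : finType) (e : rel T) (S : {set T}) : bool :=
  [forall x in S, forall y in S, ~~ e x y].

Definition alpha_on (T : finType) (e : rel T) (V : {set T}) : nat :=
  \max_(S : {set T} | (S \subset V) && stable e S) #|S|.

Definition alpha (T : finType) (e : rel T) : nat := alpha_on e [set: T].

Definition critical (T : finType) (e : rel T) (v : T) : Prop :=
  alpha_on e [set~ v] < alpha e.

Definition perfect_2_matching (T : finType) (e : rel T) (w : T -> T -> rat) : Prop :=
  [/\ forall x y, w x y = w y x,
      forall x y, ~~ e x y -> w x y = 0%R,
      forall x y, w x y \in [:: 0%R; (1/2)%R; 1%R],
      forall x, (\sum_(y : T) w x y <= 1)%R
    & forall x, exists y, e x y /\ w x y != 0%R].

Definition has_perfect_2_matching (T : finType) (e : rel T) : Prop :=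
  exists w : T -> T -> rat, perfect_2_matching e w.

From mathcomp Require Import all_boot all_order all_algebra.
From mathcomp Require Import perm zify.
Import GRing.Theory Num.Theory.
Set Implicit Arguments. Unset Strict Implicit. Unset Printing Implicit Defensive.

(* By Hall's theorem it suffices that |N(S)| >= |S| for every vertex set S:
   this yields an injection f with x ~ f x, i.e. a permutation whose cycles
   run along edges, and weight 1/2 on each edge {x, f x} (1 on 2-cycles) is a
   perfect 2-matching. If some S violates Hall's condition, so does the stable
   set S \ N(S); take an inclusion-minimal stable I with |N(I)| < |I| and
   v in I. For every maximum stable set M avoiding v, (M \ N(I)) u I is stable
   and, by minimality of I applied to I n M, larger than M; so v is critical. *)

Section Neighbourhood.
Variables (T : finType) (r : rel T).
Implicit Types S : {set T}.

Definition nbhd (S : {set T}) : {set T} := [set y | [exists x in S, r x y]].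

Lemma nbhdP S y : reflect (exists2 x, x \in S & r x y) (y \in nbhd S).
Proof.
rewrite inE; apply: (iffP existsP) => [[x /andP [xS rxy]]|[x xS rxy]].
  by exists x.
by exists x; rewrite xS.
Qed.

Lemma mem_nbhd S x y : x \in S -> r x y -> y \in nbhd S.
Proof. by move=> xS rxy; apply/nbhdP; exists x. Qed.

Lemma nbhdS S S' : S \subset S' -> nbhd S \subset nbhd S'.
Proof.
move=> sSS'; apply/subsetP => y /nbhdP [x xS rxy].
exact: mem_nbhd (subsetP sSS' x xS) rxy.
Qed.

End Neighbourhood.

Section HallMarriage.
Variables (T : finType) (r : rel T).
Implicit Types D R S : {set T}.

Definition matchable D R :=
  exists2 f : T -> T, {in D &, injective f} & {in D, forall x, f x \in R /\ r x (f x)}.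

Definition hall_condition D R :=
  forall S, S \subset D -> #|S| <= #|R :&: nbhd r S|.

Lemma matchable0 R : matchable set0 R.
Proof. by exists id => [x|x]; rewrite inE. Qed.

Lemma matchable1 x y : r x y -> matchable [set x] [set y].
Proof.
move=> rxy; exists (fun=> y) => [x1 x2|z].
  by rewrite !inE => /eqP -> /eqP ->.
by rewrite !inE => /eqP ->; rewrite eqxx.
Qed.

Lemma matchable_nbhd D R : matchable D R -> matchable D (R :&: nbhd r D).
Proof.
case=> f f_inj f_in; exists f => // x xD; have [fxR rxfx] := f_in x xD.
by rewrite inE fxR (mem_nbhd xD rxfx).
Qed.

Lemma matchableU D1 D2 R1 R2 : [disjoint R1 & R2] ->
  matchable D1 R1 -> matchable D2 R2 -> matchable (D1 :|: D2) (R1 :|: R2).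
Proof.
move=> disR [f1 inj1 in1] [f2 inj2 in2].
pose f x := if x \in D1 then f1 x else f2 x.
have in2' x : x \in D1 :|: D2 -> x \notin D1 -> f2 x \in R2.
  by rewrite inE => /orP [->|/in2 []].
exists f => [x y xD yD|x].
  rewrite /f; case: (boolP (x \in D1)) => xD1; case: (boolP (y \in D1)) => yD1.
  - exact: inj1.
  - by move=> fxy; have [/(disjointFr disR) + _] := in1 x xD1; rewrite fxy (in2' y).
  - by move=> fxy; have [/(disjointFr disR) + _] := in1 y yD1; rewrite -fxy (in2' x).
  - by apply: inj2; move: xD yD; rewrite !inE (negbTE xD1) (negbTE yD1).
rewrite /f inE; case: (boolP (x \in D1)) => [/in1 [fxR ->]|xD1 /= xD2].
  by rewrite inE fxR.
by have [fxR ->] := in2 x xD2; rewrite inE fxR orbT.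
Qed.

Lemma hall_conditionS D D' R : D' \subset D ->
  hall_condition D R -> hall_condition D' R.
Proof. by move=> sD'D hD S sSD'; apply/hD/(subset_trans sSD' sD'D). Qed.

Lemma hall_condition_tight D R S0 : S0 \subset D -> hall_condition D R ->
  #|R :&: nbhd r S0| <= #|S0| -> hall_condition (D :\: S0) (R :\: nbhd r S0).
Proof.
move=> sS0D hD tight S sS.
have sSD : S \subset D := subset_trans sS (subsetDl D S0).
have disS : [disjoint S & S0].
  rewrite -setI_eq0; apply/eqP/setP => x; rewrite !inE.
  by apply/andP => -[/(subsetP sS)]; rewrite inE => /andP [/negP].
have sub : R :&: nbhd r (S :|: S0) \subset
           ((R :\: nbhd r S0) :&: nbhd r S) :|: (R :&: nbhd r S0).
  apply/subsetP => y; rewrite in_setI => /andP [yR /nbhdP [x]].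
  rewrite in_setU => /orP [xS|xS0] rxy; rewrite in_setU !in_setI in_setD yR /=.
    by case: (y \in nbhd r S0); rewrite //= (mem_nbhd xS rxy).
  by rewrite (mem_nbhd xS0 rxy) orbT.
have := hD (S :|: S0) (ltac:(by rewrite subUset sSD sS0D)).
have := subset_leq_card sub; rewrite cardsU (cardsU S) (disjoint_setI0 disS) cards0.
lia.
Qed.

Lemma hall_condition_surplus D R x0 y0 : x0 \in D -> y0 \in R ->
  (forall S, S \proper D -> S != set0 -> #|S| < #|R :&: nbhd r S|) ->
  hall_condition (D :\ x0) (R :\ y0).
Proof.
move=> x0D y0R surplus S sS; have [->|[z zS]] := set_0Vmem S; first by rewrite cards0.
have pSD : S \proper D.
  rewrite properEneq (subset_trans sS (subsetDl _ _)) andbT.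
  by apply: contraTneq x0D => <-; apply/negP => /(subsetP sS); rewrite !inE eqxx.
have := surplus S pSD (ltac:(by apply/set0Pn; exists z)).
have sub : R :&: nbhd r S \subset y0 |: ((R :\ y0) :&: nbhd r S).
  apply/subsetP => y; rewrite in_setI in_setU1 in_setI in_setD1 => /andP [-> ->].
  by rewrite !andbT; case: (y == y0).
have := subset_leq_card sub; rewrite cardsU1; lia.
Qed.

Theorem hall_marriage D R : hall_condition D R -> matchable D R.
Proof.
(* Either some proper nonempty S0 is tight and D splits along S0, or every
   such S0 has surplus and any edge at x0 can be matched first. *)
move: {2}#|D| (leqnn #|D|) => n; elim: n D R => [|n IH] D R cardD hD.
  by move: cardD; rewrite leqn0 cards_eq0 => /eqP ->; apply: matchable0.
have [->|[x0 x0D]] := set_0Vmem D; first exact: matchable0.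
case: (boolP [exists S0 : {set T},
   [&& S0 \proper D, S0 != set0 & #|R :&: nbhd r S0| <= #|S0|]]).
- case/existsP => S0 /and3P [pS0D nS0 tight].
  have sS0D := proper_sub pS0D.
  rewrite -(setID D S0) (setIidPr sS0D) -(setID R (nbhd r S0)).
  apply: matchableU.
  + rewrite -setI_eq0; apply/eqP/setP => y.
    by rewrite in_set0 !in_setI in_setD; case: (y \in nbhd r S0); rewrite ?andbF.
  + apply/matchable_nbhd/IH; last exact: hall_conditionS hD.
    by have := proper_card pS0D; lia.
  + apply: IH; last exact: hall_condition_tight.
    by move: nS0; rewrite -card_gt0 cardsD (setIidPr sS0D); lia.
- move=> /existsPn no_tight.
  have surplus S : S \proper D -> S != set0 -> #|S| < #|R :&: nbhd r S|.
    by move=> pSD nS; have := no_tight S; rewrite pSD nS /= -ltnNge.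
  have := hD [set x0] (ltac:(by rewrite sub1set)).
  rewrite cards1 card_gt0 => /set0Pn [y0]; rewrite in_setI => /andP [y0R /nbhdP [x]].
  rewrite inE => /eqP -> rx0y0.
  rewrite -(setD1K x0D) -(setD1K y0R); apply: matchableU.
  + by rewrite -setI_eq0; apply/eqP/setP => y; rewrite !inE; case: eqP.
  + exact: matchable1.
  + apply: IH; last exact: hall_condition_surplus.
    by move: cardD; rewrite (cardsD1 x0) x0D; lia.
Qed.

End HallMarriage.

Section StableSets.
Variables (T : finType) (e : rel T).
Implicit Types I M S V W : {set T}.

Definition deficient S : bool := #|nbhd e S| < #|S|.

Lemma stableP S : reflect {in S &, forall x y, ~~ e x y} (stable e S).
Proof.
apply: (iffP forall_inP) => [stS x y xS yS | stS x xS].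
  by move/forall_inP: (stS x xS); apply.
by apply/forall_inP => y yS; apply: stS.
Qed.

Lemma stable0 : stable e set0.
Proof. by apply/stableP => x; rewrite inE. Qed.

Lemma stableS S S' : S \subset S' -> stable e S' -> stable e S.
Proof.
move=> sSS' /stableP stS'; apply/stableP => x y xS yS.
by apply: stS'; apply: (subsetP sSS').
Qed.

Lemma stable_alpha_on V S : S \subset V -> stable e S -> #|S| <= alpha_on e V.
Proof. by move=> sSV stS; apply: leq_bigmax_cond; rewrite sSV stS. Qed.

Lemma alpha_on_lt V W :
  (forall M, M \subset V -> stable e M ->
     exists2 M' : {set T}, M' \subset W & stable e M' && (#|M| < #|M'|)) ->
  alpha_on e V < alpha_on e W.
Proof.
move=> grow; have [M0 sM0W /andP [stM0 ltM0]] := grow set0 (sub0set V) stable0.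
suff : alpha_on e V <= (alpha_on e W).-1.
  by have := stable_alpha_on sM0W stM0; rewrite cards0 in ltM0; lia.
apply/bigmax_leqP => M /andP [sMV stM].
have [M' sM'W /andP [stM' ltMM']] := grow M sMV stM.
by have := stable_alpha_on sM'W stM'; lia.
Qed.

Lemma stable_setD_nbhd S : stable e (S :\: nbhd e S).
Proof.
apply/stableP => x y; rewrite !in_setD => /andP [_ xS] /andP [yNS _].
by apply: contra yNS; apply: mem_nbhd.
Qed.

Hypothesis e_sym : symmetric e.

Lemma nbhd_setD_nbhd S : nbhd e (S :\: nbhd e S) \subset nbhd e S :\: S.
Proof.
apply/subsetP => y /nbhdP [x]; rewrite in_setD => /andP [xNS xS] exy.
rewrite in_setD (mem_nbhd xS exy) andbT.
by apply: contra xNS => yS; apply: mem_nbhd yS _; rewrite e_sym.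
Qed.

Lemma deficient_setD_nbhd S : deficient S -> deficient (S :\: nbhd e S).
Proof.
rewrite /deficient => defS; have := subset_leq_card (nbhd_setD_nbhd S).
have := subset_leq_card (subsetIl (nbhd e S) S).
by rewrite !cardsD (setIC S); lia.
Qed.

Lemma stable_exchange M I : stable e M -> stable e I ->
  stable e (M :\: nbhd e I :|: I).
Proof.
move=> /stableP stM /stableP stI; apply/stableP => x y.
rewrite !in_setU !in_setD => /orP [/andP [xNI xM]|xI] /orP [/andP [yNI yM]|yI].
- exact: stM.
- by apply: contra xNI => exy; apply: mem_nbhd yI _; rewrite e_sym.
- by apply: contra yNI; apply: mem_nbhd.
- exact: stI.
Qed.

Lemma card_exchange M I : stable e M -> deficient I ->
  ~~ deficient (I :&: M) -> #|M| < #|M :\: nbhd e I :|: I|.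
Proof.
rewrite /deficient -leqNgt => stM defI defK.
(* M avoids N(I n M) as M is stable, so |M n N(I)| <= |N(I)| - |N(I n M)|,
   which is less than |I| - |I n M| = |I \ M|. *)
have sNKNI : nbhd e (I :&: M) \subset nbhd e I := nbhdS e (subsetIl I M).
have MNI : #|M :&: nbhd e I| <= #|nbhd e I| - #|nbhd e (I :&: M)|.
  rewrite -(setIidPr sNKNI) -cardsD; apply/subset_leq_card/subsetP => y.
  rewrite in_setI in_setD => /andP [yM ->]; rewrite andbT.
  apply/negP => /nbhdP [x]; rewrite in_setI => /andP [_ xM].
  by apply/negP; move/stableP: stM; apply.
have sub : M :\: nbhd e I :|: I :\: M \subset M :\: nbhd e I :|: I.
  by apply/setUS/subsetDl.
have dis : [disjoint M :\: nbhd e I & I :\: M].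
  rewrite -setI_eq0; apply/eqP/setP => y.
  by rewrite in_set0 in_setI !in_setD; case: (y \in M); rewrite ?andbF.
have := subset_leq_card sub; rewrite cardsU (disjoint_setI0 dis) cards0.
have := cardsID M I; have := cardsD M (nbhd e I).
have := subset_leq_card (subsetIl M (nbhd e I)).
have := subset_leq_card sNKNI; lia.
Qed.

Lemma critical_minset_deficient I v :
  minset [pred S | stable e S && deficient S] I -> v \in I -> critical e v.
Proof.
case/minsetP => /andP [stI defI] minI vI; apply: alpha_on_lt => M sM stM.
have vM : v \notin M by apply/negP => /(subsetP sM); rewrite !inE eqxx.
exists (M :\: nbhd e I :|: I); first exact: subsetT.
rewrite stable_exchange //=; apply: card_exchange => //.
apply/negP => defK.
have PK : stable e (I :&: M) && deficient (I :&: M).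
  by rewrite defK andbT (stableS (subsetIl I M) stI).
have /setP /(_ v) := minI _ PK (subsetIl I M).
by rewrite in_setI vI (negbTE vM).
Qed.

Lemma hall_condition_no_critical :
  (forall v, ~ critical e v) -> hall_condition e setT setT.
Proof.
move=> no_crit S _; rewrite setTI leqNgt; apply/negP => defS.
have [I minI _] := @minset_exists _ [pred S | stable e S && deficient S]
  (S :\: nbhd e S) (ltac:(by rewrite /= stable_setD_nbhd deficient_setD_nbhd)).
have /andP [_ defI] := minsetp minI.
have [v vI] : exists v, v \in I.
  by apply/set0Pn; rewrite -card_gt0; move: defI; rewrite /deficient; lia.
exact: no_crit v (critical_minset_deficient minI vI).
Qed.

End StableSets.

Local Open Scope ring_scope.

Lemma sum_eq_delta (R : pzSemiRingType) (T : finType) (a : T) :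
  \sum_(y : T) (y == a)%:R = 1 :> R.
Proof. by rewrite (bigD1 a) //= eqxx big1 ?addr0 // => y /negbTE ->. Qed.

Section PermutationTwoMatching.
Variables (T : finType) (e : rel T) (s : {perm T}).

Definition perm_weight (x y : T) : rat := ((s x == y)%:R + (s y == x)%:R) / 2.

Lemma sum_perm_weight x : \sum_y perm_weight x y = 1.
Proof.
rewrite -mulr_suml big_split /=.
under [X in X + _]eq_bigr do rewrite eq_sym.
under [X in _ + X]eq_bigr do rewrite (canF_eq (permK s)).
by rewrite !sum_eq_delta divff.
Qed.

Hypotheses (e_sym : symmetric e) (e_perm : forall x, e x (s x)).

Lemma perfect_2_matching_perm_weight : perfect_2_matching e perm_weight.
Proof.
split => [x y|x y nexy|x y|x|x].
- by rewrite /perm_weight addrC.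
- have /negbTE sxy : s x != y by apply: contraNneq nexy => <-.
  have /negbTE syx : s y != x by apply: contraNneq nexy => <-; rewrite e_sym.
  by rewrite /perm_weight sxy syx addr0 mul0r.
- by rewrite /perm_weight; case: (s x == y); case: (s y == x).
- by rewrite sum_perm_weight.
- exists (s x); split => //; rewrite /perm_weight eqxx.
  by rewrite mulf_neq0 ?invr_eq0 // -natrD pnatr_eq0.
Qed.

End PermutationTwoMatching.

Theorem corollary1 (T : finType) (e : rel T) :
  simple_graph e -> no_isolated e ->
  (forall v : T, ~ critical e v) ->
  has_perfect_2_matching e.
Proof.
move=> [e_sym _] _ no_crit.
have [f f_inj f_e] := hall_marriage (hall_condition_no_critical e_sym no_crit).
have {}f_inj : injective f by move=> x y; apply: f_inj; rewrite inE.
exists (perm_weight (perm f_inj)); apply: perfect_2_matching_perm_weight => // x.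
by rewrite permE; case: (f_e x (in_setT x)).
Qed.
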